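(* Let $n,k\ge 0$ be integers with $n\ge 2k$. For every $\alpha\in F_n(2,k)$ with $\alpha\ne\gamma_{n,k}$, the last word of the list $\mathcal{F}(\alpha)$ is $\gamma_{n,k}=0^{n-2k}(01)^k$.
   Context: The weight of a binary word is its number of 1's. $F_n(2,k)$ is the set of binary words of length $n$ and weight $k$ containing no two consecutive 1's. $\gamma_{n,k}=0^{n-2k}(01)^k$. A homogeneous transposition of a binary word exchanges a 1 and a 0 such that no 1 occurs strictly between the two exchanged positions. For a set $S$ of binary words of the same length and weight and $\alpha\in S$, the list obtained by applying the greedy algorithm for $S$ to $\alpha$ is built as follows: start with the list $(\alpha)$; repeatedly, for the last word $w$ of the current list, among all words obtainable from $w$ by one homogeneous transposition that lie in $S$ and do not already occur in the list, choose the one obtained by transposing the leftmost possible 1 with (among transpositions of that 1) the leftmost possible 0, and append it; stop when no such word exists. $\mathcal{F}(\alpha)$ denotes the list obtained by applying the greedy algorithm for $F_n(2,k)$ to $\alpha\in F_n(2,k)$. *)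

(* Binary words are [seq bool] (true = 1, false = 0). *)
From mathcomp Require Import all_boot.
Set Implicit Arguments. Unset Strict Implicit. Unset Printing Implicit Defensive.

Definition word := seq bool.

Definition weight (w : word) : nat := count id w.

Definition no11 (w : word) : bool :=
  all (fun p => ~~ (nth false w p && nth false w p.+1)) (iota 0 (size w).-1).

Definition inF (n k : nat) (w : word) : bool :=
  [&& size w == n, weight w == k & no11 w].

Definition gamma (n k : nat) : word :=
  nseq (n - 2 * k) false ++ flatten (nseq k [:: false; true]).

Definition no1_between (w : word) (i j : nat) : bool :=
  all (fun p => ~~ nth false w p) (iota (minn i j).+1 ((maxn i j - minn i j).-1)).

Definition swap10 (w : word) (i j : nat) : word :=
  set_nth false (set_nth false w i false) j true.

(* all words obtained from w by one homogeneous transposition, listed in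
   lexicographic order of (position of the transposed 1, position of the 0) *)
Definition htrans (w : word) : seq word :=
  flatten [seq [seq swap10 w i j | j <- iota 0 (size w) &
                 ~~ nth false w j && no1_between w i j]
          | i <- iota 0 (size w) & nth false w i].

(* one step of the greedy algorithm for S on the current list L (nonempty,
   represented as head a0 and tail L) *)
Definition greedy_step (S : pred word) (a0 : word) (L : seq word) : seq word :=
  let w := last a0 L in
  match [seq c <- htrans w | S c & c \notin a0 :: L] with
  | c :: _ => rcons L c
  | [::] => L
  end.

(* All words in the list are distinct and of length size alpha, so the
   algorithm stops after fewer than 2^(size alpha) appended words; iterating
   the step 2^(size alpha) times therefore reaches the stopping point
   (the step is the identity once no word can be appended). *)
Definition greedy (S : pred word) (alpha : word) : seq word :=
  alpha :: iter (2 ^ size alpha) (greedy_step S alpha) [::].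

Definition calF (n k : nat) (alpha : word) : seq word := greedy (inF n k) alpha.

From mathcomp Require Import all_boot zify.
Set Implicit Arguments. Unset Strict Implicit. Unset Printing Implicit Defensive.

(* Let r be maximal such that the current word c ends with (01)^r. If c is not
   gamma, the last 1 standing before this suffix can be moved just in front of it,
   giving an admissible word ending with (01)^(r+1); every admissible word obtained
   by moving a 1 at or before that position still ends with (01)^r, and the greedy
   rule examines these candidates first. Hence the last word always has the longest
   alternating suffix of the list, the candidate ending with (01)^(r+1) is new, and
   the list keeps growing until gamma is reached, which must happen since its words
   are distinct. The admissible neighbours of gamma are obtained by moving its first
   1 to the left; in the candidate list of the predecessor of gamma they all come
   before gamma, so they were already listed and the algorithm stops at gamma. *)

Lemma nth_swap10 w i j p :
  nth false (swap10 w i j) p =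
  if p == j then true else if p == i then false else nth false w p.
Proof. by rewrite /swap10 nth_set_nth /= nth_set_nth. Qed.

Lemma size_swap10 w i j : i < size w -> j < size w -> size (swap10 w i j) = size w.
Proof. by move=> Hi Hj; rewrite /swap10 !size_set_nth; lia. Qed.

Lemma no11P w : reflect (forall p, ~~ (nth false w p && nth false w p.+1)) (no11 w).
Proof.
apply: (iffP allP) => [H p | H p _]; last exact: H.
have [Hp | Hp] := ltnP p (size w).-1; first by apply: H; rewrite mem_iota.
by rewrite (@nth_default _ _ _ p.+1) ?andbF //; lia.
Qed.

Lemma no1_betweenC w i j : no1_between w i j = no1_between w j i.
Proof. by rewrite /no1_between minnC maxnC. Qed.

Lemma no1_betweenP w i j :
  reflect (forall p, minn i j < p < maxn i j -> ~~ nth false w p) (no1_between w i j).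
Proof.
apply: (iffP allP) => H p Hp; apply: H; first by rewrite mem_iota; lia.
by move: Hp; rewrite mem_iota; lia.
Qed.

Lemma no1_between_swap10 w i j : no1_between (swap10 w i j) i j = no1_between w i j.
Proof.
apply: eq_in_all => p; rewrite mem_iota => Hp.
have [pi pj] : p != i /\ p != j.
  by case: (leqP i j) Hp => ij; rewrite ?(minn_idPl ij) ?(maxn_idPr ij)
       ?(minn_idPr (ltnW ij)) ?(maxn_idPl (ltnW ij)); split; apply/eqP; lia.
by rewrite nth_swap10 (negbTE pi) (negbTE pj).
Qed.

Definition htransposable (w : word) (i j : nat) : bool :=
  [&& nth false w i, ~~ nth false w j & no1_between w i j].

Lemma htransposable_neq w i j : htransposable w i j -> i != j.
Proof. by case/and3P=> wi wj _; apply: contraNneq wj => <-. Qed.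

Lemma htransposable_swap10 w i j :
  htransposable w i j -> htransposable (swap10 w i j) j i.
Proof.
move=> hij; have /negbTE ij := htransposable_neq hij.
case/and3P: hij => _ _ nb.
by rewrite /htransposable !nth_swap10 ij !eqxx no1_betweenC no1_between_swap10 nb.
Qed.

Lemma swap10K w i j : i < size w -> j < size w -> htransposable w i j ->
  swap10 (swap10 w i j) j i = w.
Proof.
move=> Hi Hj /and3P [wi /negbTE wj _].
apply: (@eq_from_nth _ false); first by rewrite !size_swap10.
move=> p _; rewrite !nth_swap10.
by case: (eqVneq p i) => [->|_] //; case: (eqVneq p j) => [->|].
Qed.

Lemma weight_swap10 w i j : i < size w -> j < size w -> htransposable w i j ->
  weight (swap10 w i j) = weight w.
Proof.
move=> Hi Hj hij; have /negbTE ji := htransposable_neq hij; rewrite eq_sym in ji.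
case/and3P: hij => wi /negbTE wj _.
rewrite /weight /swap10 count_set_nthF // count_set_nthF // nth_set_nth /= ji wj wi /=.
suff: 0 < count id w by lia.
by rewrite -has_count; apply/(has_nthP false); exists i.
Qed.

Definition htrans_at (w : word) (i : nat) : seq word :=
  [seq swap10 w i j | j <- iota 0 (size w) & ~~ nth false w j && no1_between w i j].

Definition htrans_on (w : word) (s : seq nat) : seq word :=
  flatten [seq htrans_at w i | i <- s & nth false w i].

Lemma htrans_onE w : htrans w = htrans_on w (iota 0 (size w)).
Proof. by []. Qed.

Lemma htrans_on_cat w s1 s2 : htrans_on w (s1 ++ s2) = htrans_on w s1 ++ htrans_on w s2.
Proof. by rewrite /htrans_on filter_cat map_cat flatten_cat. Qed.

Lemma mem_htrans_on w s x :
  reflect (exists i j, [/\ i \in s, j < size w, htransposable w i j & x = swap10 w i j])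
          (x \in htrans_on w s).
Proof.
apply: (iffP flattenP) => [[l /mapP [i + ->] /mapP [j + ->]]|[i [j [iS js hij ->]]]].
  rewrite !mem_filter mem_iota => /andP [wi iS] /andP [/andP [wj nb] /andP [_ js]].
  by exists i, j; split; rewrite // /htransposable wi wj nb.
case/and3P: hij => wi wj nb.
exists (htrans_at w i); first by apply: map_f; rewrite mem_filter wi.
by apply: map_f; rewrite mem_filter wj nb mem_iota.
Qed.

Lemma mem_htrans_swap10 c i j : i < size c -> j < size c -> htransposable c i j ->
  c \in htrans (swap10 c i j).
Proof.
move=> Hi Hj hij; apply/mem_htrans_on; exists j, i.
by rewrite mem_iota !size_swap10 // swap10K //; split => //; exact: htransposable_swap10.
Qed.

Definition rep01 (r : nat) : word := flatten (nseq r [:: false; true]).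

Lemma size_rep01 r : size (rep01 r) = 2 * r.
Proof. by elim: r => //= r IH; rewrite /rep01 /= in IH *; rewrite IH; lia. Qed.

Lemma count_rep01 r : count id (rep01 r) = r.
Proof. by elim: r => //= r IH; rewrite /rep01 /= in IH *; rewrite IH. Qed.

Lemma nth_rep01 r q : nth false (rep01 r) q = (q < 2 * r) && odd q.
Proof.
elim: r q => [|r IH] [|[|q]] //=; rewrite /rep01 /= -/(rep01 r) in IH *; first lia.
by rewrite IH negbK; case: (odd q); lia.
Qed.

Lemma size_gamma n k : 2 * k <= n -> size (gamma n k) = n.
Proof. by move=> H; rewrite size_cat size_nseq -/(rep01 k) size_rep01; lia. Qed.

Lemma nth_gamma n k p : 2 * k <= n ->
  nth false (gamma n k) p = (n - 2 * k <= p < n) && odd (n - p).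
Proof.
move=> H; rewrite nth_cat size_nseq -/(rep01 k) nth_rep01.
by case: ltnP => Hp; [rewrite nth_nseq if_same | case: (ltnP p n) => /=]; lia.
Qed.

(* [alt_suffix r w] says that [w] ends with [(01)^r], see [alt_suffix_drop]. *)
Definition alt_suffix (r : nat) (w : word) : bool :=
  (2 * r <= size w) &&
  all (fun p => nth false w p == odd (size w - p)) (iota (size w - 2 * r) (2 * r)).

Lemma alt_suffixP r w :
  reflect (2 * r <= size w /\
           forall p, size w - 2 * r <= p < size w -> nth false w p = odd (size w - p))
          (alt_suffix r w).
Proof.
apply: (iffP andP) => [[H /allP A]|[H A]]; split=> //.
  by move=> p Hp; apply/eqP/A; rewrite mem_iota; lia.
by apply/allP => p; rewrite mem_iota => Hp; apply/eqP/A; lia.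
Qed.

Lemma alt_suffix0 w : alt_suffix 0 w.
Proof. by rewrite /alt_suffix muln0. Qed.

Lemma alt_suffix_le r s w : r <= s -> alt_suffix s w -> alt_suffix r w.
Proof.
by move=> rs /alt_suffixP [H A]; apply/alt_suffixP; split=> [|p Hp]; [lia | apply: A; lia].
Qed.

Lemma alt_suffixS r w : alt_suffix r w -> 2 * r.+1 <= size w ->
  nth false w (size w - 2 * r - 1) -> ~~ nth false w (size w - 2 * r - 2) ->
  alt_suffix r.+1 w.
Proof.
move=> /alt_suffixP [_ A] H w1 /negbTE w0; apply/alt_suffixP; split=> // p Hp.
have [Hp'|Hp'] := leqP (size w - 2 * r) p; first by apply: A; lia.
have [->|/eqP p1] := eqVneq p (size w - 2 * r - 1); first by rewrite w1; lia.
have -> : p = size w - 2 * r - 2 by lia.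
by rewrite w0; lia.
Qed.

Lemma alt_suffix_head r w : alt_suffix r w -> ~~ nth false w (size w - 2 * r).
Proof.
case: r => [_|r /alt_suffixP [H A]]; first by rewrite subn0 nth_default.
by rewrite A; lia.
Qed.

Lemma alt_suffix_drop r w : alt_suffix r w -> drop (size w - 2 * r) w = rep01 r.
Proof.
move=> /alt_suffixP [H A]; apply: (@eq_from_nth _ false).
  by rewrite size_drop size_rep01; lia.
by move=> q; rewrite size_drop => Hq; rewrite nth_drop nth_rep01 A; lia.
Qed.

Lemma weight_alt_suffix r w : alt_suffix r w ->
  weight w = count id (take (size w - 2 * r) w) + r.
Proof.
by move=> Hr; rewrite /weight -{1}(cat_take_drop (size w - 2 * r) w) count_cat
  alt_suffix_drop // count_rep01.
Qed.

Lemma alt_suffix_gamma n k w : size w = n -> weight w = k -> alt_suffix k w -> w = gamma n k.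
Proof.
move=> sw ww Hk; have /alt_suffixP [Hkn _] := Hk.
rewrite -(cat_take_drop (size w - 2 * k) w) alt_suffix_drop // -sw.
congr (_ ++ _).
have : count id (take (size w - 2 * k) w) == 0.
  by move: ww; rewrite (weight_alt_suffix Hk); lia.
rewrite -leqn0 leqNgt -has_count => /hasPn t0.
rewrite -[in RHS](@size_takel (size w - 2 * k) _ w) ?leq_subr //.
by apply/all_pred1P/allP => b /t0; case: b.
Qed.

Lemma no11_swap10 w i j : 0 < j -> no11 w ->
  ~~ nth false (swap10 w i j) j.-1 -> ~~ nth false (swap10 w i j) j.+1 ->
  no11 (swap10 w i j).
Proof.
move=> j0 /no11P nw l r; apply/no11P => p.
case: (eqVneq p j) => [->|pj]; first by rewrite (negbTE r) andbF.
case: (eqVneq p.+1 j) => [pj1|pj1]; first by move: l; rewrite -pj1 /= => /negbTE ->.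
rewrite !nth_swap10 (negbTE pj) (negbTE pj1).
by case: ifP => _; case: ifP => _ //; rewrite ?andbF //; apply: nw.
Qed.

Lemma htrans_target_between w i j m :
  no11 (swap10 w i j) -> htransposable w i j -> nth false w m -> m != i ->
  (i < j) = (i < m) -> [/\ minn i m < j < maxn i m, j.+1 != m & m.+1 != j].
Proof.
move=> /no11P nu hij wm /negbTE mi side; have /eqP ij := htransposable_neq hij.
case/and3P: hij => _ wj /no1_betweenP nb.
have jm : j != m by apply: contraNneq wj => ->.
have um : nth false (swap10 w i j) m by rewrite nth_swap10 eq_sym (negbTE jm) mi.
have uj : nth false (swap10 w i j) j by rewrite nth_swap10 eqxx.
have jm1 : j.+1 != m by apply/eqP => E; move: (nu j); rewrite E uj um.
have mj1 : m.+1 != j by apply/eqP => E; move: (nu m); rewrite E uj um.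
have nbm : ~ (minn i j < m < maxn i j) by move/nb; rewrite wm.
by split=> //; move/eqP: jm; lia.
Qed.

Lemma alt_suffix_swap10 r w i j : alt_suffix r w ->
  i < size w - 2 * r -> j < size w - 2 * r -> alt_suffix r (swap10 w i j).
Proof.
move=> /alt_suffixP [H A] Hi Hj.
have sw : size (swap10 w i j) = size w by apply: size_swap10; lia.
apply/alt_suffixP; rewrite sw; split=> // p Hp.
have [pi pj] : p != i /\ p != j by split; apply/eqP; lia.
by rewrite nth_swap10 (negbTE pi) (negbTE pj) A.
Qed.

Lemma htrans_target_before_alt_suffix r w i j :
  no11 (swap10 w i j) -> alt_suffix r w -> i < size w - 2 * r -> j < size w ->
  htransposable w i j -> j < size w - 2 * r.
Proof.
move=> nu Hr Hi Hj hij; rewrite ltnNge; apply/negP => Hj'.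
case: r Hr Hi Hj' => [|r] /alt_suffixP [H A] Hi Hj'; first lia.
set m := size w - 2 * r.+1 + 1.
have wm : nth false w m by rewrite A; lia.
have mi : m != i by apply/eqP; lia.
have side : (i < j) = (i < m) by lia.
by have [btw /eqP jm1 _] := htrans_target_between nu hij wm mi side; lia.
Qed.

Section AltSuffixProgress.

Variables (n k r : nat) (c : word).
Hypotheses (sc : size c = n) (wc : weight c = k) (nc : no11 c) (Hkn : 2 * k <= n).
Hypotheses (rk : r < k) (suf : alt_suffix r c) (nsuf : ~~ alt_suffix r.+1 c).

Lemma before_alt_suffix_zero : ~~ nth false c (n - 2 * r - 1).
Proof.
apply: contra nsuf => c1.
have c0 : ~~ nth false c (n - 2 * r - 2).
  move/no11P: nc => /(_ (n - 2 * r - 2)).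
  by rewrite (_ : (n - 2 * r - 2).+1 = n - 2 * r - 1) ?c1 ?andbT //; lia.
by apply: alt_suffixS; rewrite ?sc //; lia.
Qed.

Lemma last_one_before_alt_suffix : exists q, [/\ q < n - 2 * r - 1, nth false c q &
  forall p, q < p < n - 2 * r -> ~~ nth false c p].
Proof.
pose P p := (p < n - 2 * r) && nth false c p.
have exP : exists p, P p.
  have : has id (take (n - 2 * r) c).
    by rewrite has_count; move: wc; rewrite (weight_alt_suffix suf) sc; lia.
  case/(has_nthP false) => p; rewrite size_takel ?sc ?leq_subr // => Hp.
  by rewrite nth_take // => cp; exists p; rewrite /P Hp.
have ubP p : P p -> p <= n by case/andP; lia.
case: (ex_maxnP exP ubP) => q /andP [qr cq] qmax.
have gap := before_alt_suffix_zero.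
exists q; split=> // [|p Hp].
  have [//|lt|eq] := ltngtP q (n - 2 * r - 1); first lia.
  by move: cq; rewrite eq (negbTE gap).
by apply/negP => cp; have := qmax p; rewrite /P cp andbT; lia.
Qed.

Lemma htrans_alt_suffix_progress : exists u A B, [/\ htrans c = A ++ B, u \in A, inF n k u,
  alt_suffix r.+1 u & forall x, x \in A -> inF n k x -> alt_suffix r x].
Proof.
have [q [qj cq qmax]] := last_one_before_alt_suffix.
set j := n - 2 * r - 1 in qj *.
have hqj : htransposable c q j.
  rewrite /htransposable cq before_alt_suffix_zero; apply/no1_betweenP => p Hp.
  by apply: qmax; lia.
set u := swap10 c q j.
have su : size u = n by rewrite size_swap10 sc //; lia.
have u_left : ~~ nth false u j.-1.
  rewrite nth_swap10 (_ : j.-1 == j = false); last by apply/eqP; lia.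
  by case: ifP => // /eqP jq; apply: qmax; lia.
have u_right : ~~ nth false u j.+1.
  rewrite nth_swap10.
  have [/negbTE -> /negbTE ->] : j.+1 != j /\ j.+1 != q by split; apply/eqP; lia.
  by rewrite (_ : j.+1 = size c - 2 * r); [exact: alt_suffix_head | lia].
exists u, (htrans_on c (iota 0 q.+1)), (htrans_on c (iota q.+1 (n - q.+1))); split.
- by rewrite htrans_onE sc -htrans_on_cat -iotaD subnKC //; lia.
- by apply/mem_htrans_on; exists q, j; rewrite mem_iota sc; split=> //; lia.
- rewrite /inF su weight_swap10 ?sc ?wc ?eqxx //=; try lia.
  by apply: no11_swap10 => //; lia.
- apply: alt_suffixS; rewrite ?su.
  + by apply: alt_suffix_swap10 => //; rewrite sc; lia.
  + lia.
  + by rewrite (_ : n - 2 * r - 1 = j) // nth_swap10 eqxx.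
  + by rewrite (_ : n - 2 * r - 2 = j.-1) //; lia.
move=> x /mem_htrans_on [i [j' [iq j'n hij ->]]] /and3P [_ _ nx].
rewrite mem_iota in iq.
apply: alt_suffix_swap10 => //; rewrite sc; first lia.
by rewrite -sc; apply: (htrans_target_before_alt_suffix nx); rewrite ?sc //; lia.
Qed.

End AltSuffixProgress.

Lemma gamma_neighbour n k y : 2 * k <= n -> y \in htrans (gamma n k) -> inF n k y ->
  exists j, [/\ n - 2 * k + 1 < n, j < n - 2 * k + 1 &
                y = swap10 (gamma n k) (n - 2 * k + 1) j].
Proof.
move=> Hkn /mem_htrans_on [i [j [+ jn hij ->]]] /and3P [_ _ ny].
rewrite mem_iota size_gamma // in jn * => /andP [_ iN].
have /and3P [+ _ _] := hij; rewrite nth_gamma // => /andP [/andP [ti _] oi].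
have [ij|ji|E] := ltngtP i j.
- have gm : nth false (gamma n k) i.+2 by rewrite nth_gamma //; lia.
  have mi : i.+2 != i by apply/eqP; lia.
  have side : (i < j) = (i < i.+2) by lia.
  by have [btw /eqP jm1 _] := htrans_target_between ny hij gm mi side; lia.
- have [Ei|/eqP Ni] := eqVneq i (n - 2 * k + 1); first by exists j; rewrite -Ei.
  have gm : nth false (gamma n k) (i - 2) by rewrite nth_gamma //; lia.
  have mi : i - 2 != i by apply/eqP; lia.
  have side : (i < j) = (i < i - 2) by lia.
  by have [btw _ /eqP mj1] := htrans_target_between ny hij gm mi side; lia.
- by move: (htransposable_neq hij); rewrite E eqxx.
Qed.

Lemma swap10_swap10 w i m j : i < size w -> m < size w -> j < size w ->
  ~~ nth false w m -> swap10 (swap10 w i m) m j = swap10 w i j.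
Proof.
move=> Hi Hm Hj /negbTE wm.
apply: (@eq_from_nth _ false); first by rewrite !size_swap10 ?size_swap10.
move=> p _; rewrite !nth_swap10.
by case: (eqVneq p j) => // _; case: (eqVneq p m) => [->|]; case: ifP.
Qed.

Lemma iota_split m n : m < n -> iota 0 n = iota 0 m ++ m :: iota m.+1 (n - m.+1).
Proof. by move=> mn; rewrite -[in LHS](subnKC (ltnW mn)) iotaD add0n -(subnSK mn). Qed.

Lemma htrans_on_zeros w s : {in s, forall p, ~~ nth false w p} -> htrans_on w s = [::].
Proof.
by move=> z; rewrite /htrans_on (@eq_in_filter _ _ pred0) ?filter_pred0 // => p /z /negbTE.
Qed.

Lemma htrans_gamma_neighbour_order n k v j : 2 * k <= n -> n - 2 * k + 1 < n ->
  v < n - 2 * k + 1 -> j < n - 2 * k + 1 -> j != v ->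
  exists l1 l2, [/\ htrans (swap10 (gamma n k) (n - 2 * k + 1) v) = l1 ++ gamma n k :: l2,
                    gamma n k \notin l1 & swap10 (gamma n k) (n - 2 * k + 1) j \in l1].
Proof.
move=> Hkn tn vt jt jv; set t := n - 2 * k + 1 in tn vt jt *; set g := gamma n k.
have sg : size g = n by rewrite size_gamma.
have gt : nth false g t by rewrite nth_gamma //; lia.
have gz p : p < t -> ~~ nth false g p by rewrite nth_gamma //; lia.
have hg : htransposable g t v.
  by rewrite /htransposable gt gz //=; apply/no1_betweenP => p Hp; apply: gz; lia.
set c := swap10 g t v.
have sc : size c = n by rewrite size_swap10 ?sg //; lia.
have cz p : p < t -> p != v -> ~~ nth false c p.
  by move=> pt /negbTE pv; rewrite nth_swap10 pv (_ : p == t = false) ?gz //; apply/eqP; lia.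
have hc : htransposable c v t := htransposable_swap10 hg.
have gE : swap10 c v t = g by rewrite swap10K ?sg //; lia.
pose l1 := [seq swap10 c v j0 | j0 <- iota 0 t & ~~ nth false c j0 && no1_between c v j0].
have [l2 hE] : exists l2, htrans c = l1 ++ g :: l2.
  rewrite htrans_onE sc (iota_split (_ : v < n)); last lia.
  rewrite htrans_on_cat htrans_on_zeros; last first.
    by move=> p; rewrite mem_iota => Hp; apply: cz; lia.
  case/and3P: hc => cv ct nb.
  rewrite /htrans_on /= cv /= {1}/htrans_at sc (iota_split tn) filter_cat map_cat /=.
  rewrite ct nb /= gE.
  by eexists; rewrite -catA.
exists l1, l2; split=> //.
- apply/mapP => -[j0]; rewrite mem_filter mem_iota => /andP [_ Hj0] E.
  have [tj tv] : t != j0 /\ t != v by split; apply/eqP; lia.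
  case/and3P: hc => _ /negbTE ct _.
  by move: gt; rewrite E nth_swap10 (negbTE tj) (negbTE tv) ct.
have [jn ct] : j < size c /\ ~~ nth false c t by case/and3P: hc; rewrite sc; split => //; lia.
rewrite -gE swap10_swap10 ?sc //; try lia.
apply: map_f; rewrite mem_filter mem_iota cz //=.
rewrite add0n jt andbT; apply/no1_betweenP => p Hp; apply: cz; [lia | apply/eqP; lia].
Qed.

Lemma filter_cat_cons_head (T : eqType) (P : pred T) l1 x l2 s :
  filter P (l1 ++ x :: l2) = x :: s -> x \notin l1 -> {in l1, forall y, ~~ P y}.
Proof.
rewrite filter_cat; case E: (filter P l1) => [|z t] /=.
  move=> _ _ y yl; apply/negP => Py.
  have : y \in filter P l1 by rewrite mem_filter Py.
  by rewrite E.
move=> [<- _]; have : z \in filter P l1 by rewrite E mem_head.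
by rewrite mem_filter => /andP [_ ->].
Qed.

Lemma greedy_gamma_neighbours_visited n k c (L : seq word) s :
  2 * k <= n -> inF n k c -> c \in L ->
  filter (fun x => inF n k x && (x \notin L)) (htrans c) = gamma n k :: s ->
  {in htrans (gamma n k), forall y, inF n k y -> y \in L}.
Proof.
move=> Hkn Fc cL E y yg Fy.
have : gamma n k \in htrans c.
  have : gamma n k \in [seq x <- htrans c | inF n k x && (x \notin L)] by rewrite E mem_head.
  by rewrite mem_filter => /andP [].
case/mem_htrans_on => i [j [iS jS hij gE]].
have cg : c \in htrans (gamma n k) by rewrite gE mem_htrans_swap10 //; rewrite mem_iota in iS.
have [v [tn vt cE]] := gamma_neighbour Hkn cg Fc.
have [j' [_ jt yE]] := gamma_neighbour Hkn yg Fy.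
have [jv' | jv] := eqVneq j' v; first by rewrite yE jv' -cE.
have [l1 [l2 [hE gl1 yl1]]] := htrans_gamma_neighbour_order Hkn tn vt jt jv.
rewrite cE hE in E; rewrite -yE in yl1.
by move: (filter_cat_cons_head E gl1 yl1); rewrite Fy /= negbK.
Qed.

Lemma filter_cat_head (T : eqType) (P : pred T) A B : has P A ->
  exists x s, [/\ filter P (A ++ B) = x :: s, x \in A & P x].
Proof.
rewrite has_filter filter_cat; case E: (filter P A) => [|x s] // _.
have : x \in filter P A by rewrite E mem_head.
by rewrite mem_filter => /andP [Px xA]; exists x, (s ++ filter P B).
Qed.

Lemma size_uniq_words n (s : seq word) :
  uniq s -> all (fun w => size w == n) s -> size s <= 2 ^ n.
Proof.
move=> U A; pose t := map (insubd [tuple of nseq n false]) s.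
have vt : map val t = s.
  rewrite -map_comp -[RHS]map_id; apply/eq_in_map => w ws /=.
  by rewrite insubdK //; exact: (allP A).
have Ut : uniq t by rewrite -(map_inj_uniq val_inj) vt.
rewrite -vt size_map -(card_uniqP Ut).
by apply: leq_trans (max_card _) _; rewrite card_tuple card_bool.
Qed.

(* The last word has the longest alternating suffix in the list; once it is [gamma],
   every admissible neighbour of [gamma] is listed, so that the algorithm halts. *)
Definition greedy_inv n k (a : word) (L : seq word) : Prop :=
  [/\ all (inF n k) (a :: L), uniq (a :: L),
      (forall x r, x \in a :: L -> alt_suffix r x -> alt_suffix r (last a L)) &
      (last a L = gamma n k -> {in htrans (gamma n k), forall y, inF n k y -> y \in a :: L})].

Lemma greedy_step_at_gamma n k a L : greedy_inv n k a L -> last a L = gamma n k ->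
  greedy_step (inF n k) a L = L.
Proof.
move=> [_ _ _ G] lg; rewrite /greedy_step (@eq_in_filter _ _ pred0) ?filter_pred0 //.
move=> y; rewrite lg => yg; case Fy: (inF n k y) => //=.
by rewrite (G lg y yg Fy).
Qed.

Lemma greedy_step_grows n k a L : 2 * k <= n -> greedy_inv n k a L ->
  last a L != gamma n k ->
  exists x, greedy_step (inF n k) a L = rcons L x /\ greedy_inv n k a (rcons L x).
Proof.
move=> Hkn [Fa U Tm G] cg; set c := last a L in Tm G cg *.
have Fc : inF n k c := allP Fa _ (mem_last a L).
have /and3P [/eqP sc /eqP wc nc] := Fc.
have exr : exists r, alt_suffix r c by exists 0; exact: alt_suffix0.
have ubr r : alt_suffix r c -> r <= size c by case/alt_suffixP; lia.
case: (ex_maxnP exr ubr) => r suf rmax.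
have nsuf : ~~ alt_suffix r.+1 c by apply/negP => /rmax; lia.
have rk : r < k.
  rewrite ltnNge; apply: contra cg => kr; apply/eqP/alt_suffix_gamma => //.
  exact: alt_suffix_le kr suf.
have [u [A [B [hE uA Fu sufu Asuf]]]] := htrans_alt_suffix_progress sc wc nc Hkn rk suf nsuf.
set P := fun x => inF n k x && (x \notin a :: L).
have Pu : P u by rewrite /P Fu; apply: contra nsuf => uL; exact: Tm uL sufu.
have hasPA : has P A by apply/hasP; exists u.
have [x [s [E xA /andP [Fx xL]]]] := filter_cat_head B hasPA.
exists x; split; first by rewrite /greedy_step -/c hE E.
split.
- by rewrite -rcons_cons all_rcons Fx.
- by rewrite -rcons_cons rcons_uniq xL U.
- move=> y r'; rewrite last_rcons -rcons_cons mem_rcons inE => /orP [/eqP -> //|yL] sufy.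
  apply: alt_suffix_le (Asuf x xA Fx); rewrite leqNgt; apply: contra nsuf => rr'.
  exact: alt_suffix_le rr' (Tm _ _ yL sufy).
- rewrite last_rcons => xg y yg Fy; rewrite -rcons_cons mem_rcons inE orbC.
  rewrite -hE xg in E.
  by rewrite (greedy_gamma_neighbours_visited Hkn Fc (mem_last a L) E).
Qed.

Lemma greedy_iter_inv n k a t : 2 * k <= n -> inF n k a -> a != gamma n k ->
  greedy_inv n k a (iter t (greedy_step (inF n k) a) [::]) /\
  (last a (iter t (greedy_step (inF n k) a) [::]) = gamma n k \/
   size (iter t (greedy_step (inF n k) a) [::]) = t).
Proof.
move=> Hkn Fa ag; elim: t => [|t [I D]] /=.
  split; last by right.
  split=> //=; [by rewrite Fa | by move=> x r; rewrite inE => /eqP -> | by move/eqP: ag].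
set L := iter t _ [::] in I D *.
have [lg|lg] := eqVneq (last a L) (gamma n k).
  by rewrite greedy_step_at_gamma //; split=> //; left.
have [x [-> Ix]] := greedy_step_grows Hkn I lg.
split=> //; right; rewrite size_rcons; case: D => [/eqP|->] //.
by rewrite (negbTE lg).
Qed.

Theorem lemma1 (n k : nat) (alpha : word) :
  2 * k <= n -> inF n k alpha -> alpha != gamma n k ->
  last alpha (calF n k alpha) = gamma n k.
Proof.
move=> Hkn Fa ag; rewrite /calF /greedy /=.
have [[FL UL _ _] [//|sizeL]] := greedy_iter_inv (2 ^ size alpha) Hkn Fa ag.
set L := iter _ _ [::] in FL UL sizeL *.
have /and3P [/eqP sa _ _] := Fa.
have sizes : all (fun w => size w == n) (alpha :: L).
  by apply/allP => w /(allP FL) /and3P [].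
by have := size_uniq_words UL sizes; rewrite /= sizeL sa ltnn.
Qed.
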